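(* For each $a\in I$ let $P_a$ be a bottom set of $(X_a,\prec_a)$, and let $\mathbb{A}=(P,A,\prec)$, with $P=\dot\bigcup_a P_a$, be an alignment of the family $\{(P_a,\prec_a|_{P_a})\}_{a\in I}$ having at least one column. Let $\Xi$ be any column of $\mathbb{A}$ that is maximal with respect to $\prec$ (such a column exists). Then: (1) for each $a\in I$, either $\Xi\cap P_a=\emptyset$ (a gap in row $a$), in which case set $P'_a=P_a$, or $\Xi\cap P_a=\{p_a\}$ with $p_a\in\sup P_a$, in which case set $P'_a=P_a\setminus\{p_a\}$; and $\Xi$ is not entirely gaps, i.e., $\Xi\cap P_a\neq\emptyset$ for some $a$; (2) each $P'_a$ is a bottom set of $(X_a,\prec_a)$, and the restriction $\mathbb{A}'$ of $\mathbb{A}$ to $P\setminus\Xi=\dot\bigcup_a P'_a$ (induced subgraph, with columns the remaining columns of $\mathbb{A}$ and the restricted order) is an alignment of $\{(P'_a,\prec_a|_{P'_a})\}_{a\in I}$, so that $\mathbb{A}$ is obtained from $\mathbb{A}'$ by appending the column $\Xi$; (3) every column $\Upsilon$ of $\mathbb{A}'$ satisfies either $\Upsilon\prec\Xi$ or $\Upsilon$ and $\Xi$ are incomparable.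
   Context: Let $I$ be a finite index set (''rows''), and for each $a\in I$ let $(X_a,\prec_a)$ be a finite set with a strict partial order. A subset $P\subseteq X_a$ is a bottom set if for all $p\in P$ and all $p'\prec_a p$ we have $p'\in P$. For a bottom set $P$, $\sup P$ denotes the set of its maximal elements, i.e., $p\in P$ such that there is no $p'\in P$ with $p\prec_a p'$. Given a family of finite strict posets $(Y_a,\prec_a)$, $a\in I$, with elements written $(a,i)$ and $Y=\dot\bigcup_a Y_a$, and a simple undirected graph $(Y,A)$ with set of connected components (''columns'') $\mathcal{C}(Y,A)$, an alignment of the family is a triple $(Y,A,\prec)$ where $\prec$ is a strict partial order on $\mathcal{C}(Y,A)$ such that: (P1) every column induces a complete subgraph; (P2) if $(a,i)\in Q$ and $(a,j)\in Q$ then $i=j$; (P3) if $(a,i)\in P$, $(a,j)\in Q$ and $(a,i)\prec_a(a,j)$ then $P\prec Q$; (P4) if $P\prec Q$, $(a,i)\in P$ and $(a,j)\in Q$, then $(a,i)\prec_a(a,j)$ or $(a,i)$ and $(a,j)$ are incomparable w.r.t. $\prec_a$. *)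

From HB Require Import structures.
From mathcomp Require Import all_boot.
Set Implicit Arguments. Unset Strict Implicit. Unset Printing Implicit Defensive.

Section Alignment.
Variables (I : finType) (X : I -> finType).

Definition elt := {a : I & X a}.

Definition strict_po (T : finType) (r : rel T) : Prop :=
  (forall x, ~~ r x x) /\ (forall x y z, r x y -> r y z -> r x z).

Definition bottom_set (a : I) (ord : rel (X a)) (P : {set X a}) : Prop :=
  forall p p', p \in P -> ord p' p -> p' \in P.

Definition supset (a : I) (ord : rel (X a)) (P : {set X a}) : {set X a} :=
  [set p in P | [forall p' in P, ~~ ord p p']].

Definition Pset (Pa : forall a, {set X a}) : {set elt} :=
  [set x : elt | tagged x \in Pa (tag x)].

Definition rowlt (ord : forall a, rel (X a)) (x y : elt) : bool :=
  (tag x == tag y) && ord (tag x) (tagged x) (tagged_as x y).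

Definition comp (S : {set elt}) (A : rel elt) (x : elt) : {set elt} :=
  [set y | connect (fun u v => [&& u \in S, v \in S & A u v]) x y].

Definition columns (S : {set elt}) (A : rel elt) : {set {set elt}} :=
  [set comp S A x | x in S].

Definition is_alignment (ord : forall a, rel (X a)) (S : {set elt})
    (A : rel elt) (prec : rel {set elt}) : Prop :=
  (forall x y, x \in S -> y \in S -> A x y = A y x) /\
  (forall x, x \in S -> ~~ A x x) /\
  (forall C, C \in columns S A -> ~~ prec C C) /\
  (forall C D E, C \in columns S A -> D \in columns S A -> E \in columns S A ->
      prec C D -> prec D E -> prec C E) /\
  (forall C, C \in columns S A -> forall x y, x \in C -> y \in C -> x != y -> A x y) /\
  (* (P2) at most one element per row in a column *)
  (forall C, C \in columns S A -> forall x y, x \in C -> y \in C ->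
      tag x = tag y -> x = y) /\
  (* (P3) *)
  (forall C D, C \in columns S A -> D \in columns S A -> forall x y,
      x \in C -> y \in D -> rowlt ord x y -> prec C D) /\
  (forall C D, C \in columns S A -> D \in columns S A -> prec C D -> forall x y,
      x \in C -> y \in D -> tag x = tag y ->
      rowlt ord x y || (~~ rowlt ord x y && ~~ rowlt ord y x)).

Definition row_part (Xi : {set elt}) (a : I) : {set X a} :=
  [set p : X a | Tagged X p \in Xi].

End Alignment.

From Pilot Require Import Defs.
From HB Require Import structures.
From mathcomp Require Import all_boot.

(* By (P3), an element of Xi below some element of P in its row would force
   Xi to precede another column, against maximality; so each element of Xi is
   maximal in its row, and by (P2) there is at most one per row.  Removing
   maximal elements keeps the P_a bottom sets, and removing a whole connected
   component leaves every other component unchanged, so the remaining columns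
   are columns of the original alignment and all its axioms restrict. *)

Set Implicit Arguments.
Unset Strict Implicit.
Unset Printing Implicit Defensive.

Section Components.
Variables (I : finType) (X : I -> finType).

Definition induced (S : {set elt X}) (A : rel (elt X)) : rel (elt X) :=
  fun u v => [&& u \in S, v \in S & A u v].

Lemma mem_comp S A x y : (y \in Defs.comp S A x) = connect (induced S A) x y.
Proof. by rewrite inE. Qed.

Variables (S : {set elt X}) (A : rel (elt X)).
Hypothesis A_sym : forall x y, x \in S -> y \in S -> A x y = A y x.

Lemma comp_id x : x \in Defs.comp S A x.
Proof. by rewrite mem_comp connect0. Qed.

Lemma mem_columns_comp x : x \in S -> Defs.comp S A x \in columns S A.
Proof. exact: imset_f. Qed.

Lemma induced_connect_sym : connect_sym (induced S A).
Proof.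
apply: sym_connect_sym => u v; rewrite /induced.
by case uS: (u \in S); case vS: (v \in S) => //=; rewrite A_sym.
Qed.

Lemma comp_subset x : x \in S -> Defs.comp S A x \subset S.
Proof.
move=> xS; apply/subsetP => y; rewrite mem_comp => /connectP [p].
case/lastP: p => [|p z] /=; first by move=> _ ->.
by rewrite rcons_path last_rcons => /andP[_ /and3P[_ zS _]] ->.
Qed.

Lemma column_subset C : C \in columns S A -> C \subset S.
Proof. by case/imsetP=> x xS ->; apply: comp_subset. Qed.

Lemma column_comp C x : C \in columns S A -> x \in C -> Defs.comp S A x = C.
Proof.
case/imsetP=> x0 _ ->; rewrite mem_comp => x0x; apply/setP => y.
by rewrite !mem_comp (same_connect induced_connect_sym x0x).
Qed.

Lemma comp_setD Xi x :
  Xi \in columns S A -> x \notin Xi -> Defs.comp (S :\: Xi) A x = Defs.comp S A x.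
Proof.
move=> XiS xXi.
have outside u : connect (induced S A) x u -> u \notin Xi.
  move=> xu; apply: contra xXi => uXi.
  by rewrite -(column_comp XiS uXi) mem_comp induced_connect_sym.
apply/setP => y; rewrite !mem_comp; apply/idP/idP.
  apply: connect_sub => u v /and3P[]; rewrite !inE => /andP[_ uS] /andP[_ vS] Auv.
  by apply: connect1; rewrite /induced uS vS Auv.
case/connectP=> p xp ->; apply/connectP; exists p => //.
have xp_conn : all (connect (induced S A) x) (x :: p).
  by apply/allP => z; apply: (path_connect xp).
apply: (sub_in_path (P := connect (induced S A) x)) xp_conn xp.
move=> u v xu xv /and3P[uS vS Auv].
by rewrite /induced !inE (outside u xu) (outside v xv) uS vS Auv.
Qed.

Lemma columns_setD Xi :
  Xi \in columns S A -> columns (S :\: Xi) A = columns S A :\ Xi.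
Proof.
move=> XiS; apply/setP => C; apply/imsetP/idP => [[x] | ].
  rewrite inE => /andP[xXi xS] ->; rewrite comp_setD // !inE mem_columns_comp // andbT.
  by apply: contraNneq xXi => <-; apply: comp_id.
rewrite !inE => /andP[CXi /imsetP[x xS defC]].
have xXi : x \notin Xi.
  by apply: contra CXi => xXi; rewrite defC (column_comp XiS xXi).
by exists x; rewrite ?inE ?xXi // defC comp_setD.
Qed.

End Components.

Lemma Pset_setD (I : finType) (X : I -> finType) (Pa : forall a, {set X a})
    (Xi : {set elt X}) :
  Pset (fun a => Pa a :\: row_part Xi a) = Pset Pa :\: Xi.
Proof. by apply/setP => -[a p]; rewrite !inE. Qed.

Lemma is_alignment_subset (I : finType) (X : I -> finType)
    (ord : forall a, rel (X a)) (S S' : {set elt X}) A prec :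
  is_alignment ord S A prec -> S' \subset S ->
  columns S' A \subset columns S A -> is_alignment ord S' A prec.
Proof.
move=> [Asym [Airr [irr [trans [P1 [P2 [P3 P4]]]]]]] /subsetP sS /subsetP sC.
do !split.
- by move=> x y /sS xS /sS yS; apply: Asym.
- by move=> x /sS; apply: Airr.
- by move=> C /sC; apply: irr.
- by move=> C D E /sC CS /sC DS /sC ES; apply: trans.
- by move=> C /sC; apply: P1.
- by move=> C /sC; apply: P2.
- by move=> C D /sC CS /sC DS; apply: P3.
- by move=> C D /sC CS /sC DS; apply: P4.
Qed.

Section MaximalColumn.
Variables (I : finType) (X : I -> finType) (ord : forall a, rel (X a)).
Variables (Pa : forall a, {set X a}) (A : rel (elt X)) (prec : rel {set elt X}).
Arguments ord : clear implicits.
Hypothesis Hal : is_alignment ord (Pset Pa) A prec.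
Variable Xi : {set elt X}.
Hypothesis Xi_col : Xi \in columns (Pset Pa) A.
Hypothesis Xi_max : forall C, C \in columns (Pset Pa) A -> ~~ prec Xi C.

Lemma row_part_subset a : row_part Xi a \subset Pa a.
Proof.
apply/subsetP => p; rewrite inE => /(subsetP (column_subset Xi_col)).
by rewrite inE.
Qed.

Lemma maximal_column_rowmax a (q q' : X a) :
  Tagged X q \in Xi -> q' \in Pa a -> ~~ ord a q q'.
Proof.
case: Hal => _ [_ [_ [_ [_ [_ [P3 _]]]]]] qXi q'P.
have q'S : Tagged X q' \in Pset Pa by rewrite inE.
apply: contra (Xi_max (mem_columns_comp A q'S)) => qq'.
apply: (P3 _ _ Xi_col (mem_columns_comp A q'S) _ _ qXi (comp_id _ _ _)).
by rewrite /rowlt /= eqxx tagged_asE.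
Qed.

Lemma row_part_supset a : row_part Xi a \subset supset (ord a) (Pa a).
Proof.
apply/subsetP => p pXi; rewrite inE (subsetP (row_part_subset a)) //=.
apply/forall_inP => p' p'P; apply: maximal_column_rowmax p'P.
by rewrite inE in pXi.
Qed.

Lemma row_part_cases a :
  row_part Xi a = set0 \/
  exists2 p, p \in supset (ord a) (Pa a) & row_part Xi a = [set p].
Proof.
have [->|[p pXi]] := set_0Vmem (row_part Xi a); [by left | right].
exists p; first exact: (subsetP (row_part_supset a)).
case: Hal => _ [_ [_ [_ [_ [P2 _]]]]].
apply/setP => q; rewrite [in RHS]inE; apply/idP/eqP => [qXi | ->//].
rewrite !inE in pXi qXi.
exact: eq_from_Tagged (P2 _ Xi_col _ _ qXi pXi erefl).
Qed.

Lemma row_part_neq0 : exists a, row_part Xi a != set0.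
Proof.
have [x _ defXi] := imsetP Xi_col.
exists (tag x); apply/set0Pn; exists (tagged x).
by rewrite inE taggedK defXi comp_id.
Qed.

Lemma bottom_set_setD_row_part a :
  bottom_set (ord a) (Pa a) -> bottom_set (ord a) (Pa a :\: row_part Xi a).
Proof.
move=> Pa_bot p p'; rewrite !inE => /andP[pXi pP] p'p.
have p'P := Pa_bot p p' pP p'p; rewrite p'P andbT.
by apply/negP => p'Xi; move: (maximal_column_rowmax p'Xi pP); rewrite p'p.
Qed.

End MaximalColumn.

Theorem theorem1 (I : finType) (X : I -> finType) (ord : forall a, rel (X a))
  (Hord : forall a, strict_po (ord a))
  (Pa : forall a, {set X a}) (Hbot : forall a, bottom_set (ord a) (Pa a))
  (A : rel (elt X)) (prec : rel {set elt X})
  (Hal : is_alignment ord (Pset Pa) A prec)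
  (Hne : columns (Pset Pa) A != set0)
  (Xi : {set elt X}) (HXi : Xi \in columns (Pset Pa) A)
  (Hmax : forall C, C \in columns (Pset Pa) A -> ~~ prec Xi C) :
  let P' := fun a => Pa a :\: row_part Xi a in
  (* (1) *)
  (forall a,
     (row_part Xi a = set0 /\ P' a = Pa a) \/
     (exists p, p \in supset (ord a) (Pa a) /\ row_part Xi a = [set p] /\
                P' a = Pa a :\ p)) /\
  (exists a, row_part Xi a != set0) /\
  (* (2) *)
  (forall a, bottom_set (ord a) (P' a)) /\
  Pset P' = Pset Pa :\: Xi /\
  columns (Pset P') A = columns (Pset Pa) A :\ Xi /\
  is_alignment ord (Pset P') A prec /\
  (* (3) *)
  (forall U, U \in columns (Pset P') A ->
     prec U Xi || (~~ prec U Xi && ~~ prec Xi U)).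
Proof.
move=> P'; rewrite /P' Pset_setD.
have A_sym : forall x y, x \in Pset Pa -> y \in Pset Pa -> A x y = A y x.
  by case: Hal.
have cols := columns_setD A_sym HXi.
have cols_sub : columns (Pset Pa :\: Xi) A \subset columns (Pset Pa) A.
  by rewrite cols subD1set.
split.
  move=> a; case: (row_part_cases Hal HXi Hmax a) => [->|[p pmax ->]].
    by left; rewrite setD0.
  by right; exists p.
split; first exact: (row_part_neq0 HXi).
split; first by move=> a; apply: (bottom_set_setD_row_part Hal HXi Hmax (Hbot a)).
split=> //; split=> //; split.
  by apply: is_alignment_subset Hal (subsetDl _ _) cols_sub.
move=> U /(subsetP cols_sub) US.
by case: (prec U Xi) => //=; rewrite Hmax.
Qed.
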